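(* Suppose $h$ is $L_h$-smooth (its gradient is $L_h$-Lipschitz in the Euclidean norm) and $h^*$ is twice differentiable on $\mathbb{R}^d$ with $M$-Lipschitz Hessian in the sense that $\|(\nabla^2h^*(x)-\nabla^2h^*(y))u\|\le M\|x-y\|\,\|u\|$ for all $x,y,u\in\mathbb{R}^d$. Then for all $x,y,v\in\mathbb{R}^d$ and $\lambda\in[-1,1]$, $$D_{h^*}(x+\lambda v,x)\le G(x,y,v)\,\lambda^2D_{h^*}(y+v,y),\qquad\text{with } G(x,y,v)=1+2ML_h\big(\|y-x\|+\|v\|\big).$$
   Context: $\|\cdot\|$ is the Euclidean norm. $h^*$ denotes the convex conjugate of the convex function $h$, and for differentiable $\varphi$, $D_\varphi(x,y)=\varphi(x)-\varphi(y)-\nabla\varphi(y)^\top(x-y)$. *)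

From HB Require Import structures.
From mathcomp Require Import all_boot all_order all_algebra.
From mathcomp Require Import all_classical all_reals all_analysis.
Set Implicit Arguments. Unset Strict Implicit. Unset Printing Implicit Defensive.
Import Order.TTheory GRing.Theory Num.Theory.
Import numFieldNormedType.Exports.
Local Open Scope ring_scope.
Local Open Scope classical_set_scope.

Section Defs.
Variables (R : realType) (d : nat).
Local Notation V := 'rV[R]_d.

Definition dotp (u v : V) : R := \sum_(i < d) u ord0 i * v ord0 i.
Definition enorm (u : V) : R := Num.sqrt (dotp u u).

Definition grad (f : V -> R) (x : V) : V :=
  \row_(i < d) ('d f x (delta_mx ord0 i : V)).

Definition bregman (f : V -> R) (x y : V) : R :=
  f x - f y - dotp (grad f y) (x - y).

Definition conjugate (h : V -> R) (y : V) : \bar R :=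
  ereal_sup (range (fun x : V => (dotp y x - h x)%:E)).

Definition convex_fun (h : V -> R) : Prop :=
  forall (x y : V) (t : R), 0 <= t <= 1 ->
    h (t *: x + (1 - t) *: y) <= t * h x + (1 - t) * h y.
End Defs.

From HB Require Import structures.
From mathcomp Require Import all_boot all_order all_algebra.
From mathcomp Require Import all_classical all_reals all_analysis.
From mathcomp Require Import ring lra.
Import Order.TTheory GRing.Theory Num.Theory.
Import numFieldNormedType.Exports.
Local Open Scope ring_scope.

(* Since h is L_h-smooth, its conjugate h^* is 1/L_h-strongly convex, whence
   ||u||^2 <= L_h <Hess h^*(w) u, u>.  Together with the Lipschitz bound on the
   Hessian this gives <Hess h^*(z) u, u> <= (1 + M L_h ||z - w||) <Hess h^*(w) u, u>.
   For z = x + s lam v and w = y + s v with s in [0,1], ||z - w|| <= 2 (||y - x|| + ||v||),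
   so s |-> h^*(x + s lam v) - G lam^2 h^*(y + s v) has a nonpositive second
   derivative on [0,1]; its second-order Taylor bound at s = 1 is the claim. *)

Section Euclidean.
Context {R : realType} {d : nat}.
Local Notation V := 'rV[R]_d.
Implicit Types (u v w : V) (c : R).

Lemma dotpC u v : dotp u v = dotp v u.
Proof. by apply: eq_bigr => i _; rewrite mulrC. Qed.

Lemma dotpDl u v w : dotp (u + v) w = dotp u w + dotp v w.
Proof. by rewrite /dotp -big_split; apply: eq_bigr => i _; rewrite mxE mulrDl. Qed.

Lemma dotpZl c u v : dotp (c *: u) v = c * dotp u v.
Proof. by rewrite /dotp mulr_sumr; apply: eq_bigr => i _; rewrite mxE mulrA. Qed.

Lemma dotpNl u v : dotp (- u) v = - dotp u v.
Proof. by rewrite -scaleN1r dotpZl mulN1r. Qed.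

Lemma dotpBl u v w : dotp (u - v) w = dotp u w - dotp v w.
Proof. by rewrite dotpDl dotpNl. Qed.

Lemma dotpDr u v w : dotp w (u + v) = dotp w u + dotp w v.
Proof. by rewrite dotpC dotpDl !(dotpC w). Qed.

Lemma dotpZr c u v : dotp v (c *: u) = c * dotp v u.
Proof. by rewrite dotpC dotpZl dotpC. Qed.

Lemma dotpNr u v : dotp v (- u) = - dotp v u.
Proof. by rewrite dotpC dotpNl dotpC. Qed.

Lemma dotpBr u v w : dotp w (u - v) = dotp w u - dotp w v.
Proof. by rewrite dotpDr dotpNr. Qed.

Lemma dotp0r u : dotp u 0 = 0.
Proof. by rewrite -(scale0r 0) dotpZr mul0r. Qed.

Lemma dotpp_ge0 u : 0 <= dotp u u.
Proof. by apply: sumr_ge0 => i _; rewrite -expr2 sqr_ge0. Qed.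

Lemma dotpp_eq0 u : (dotp u u == 0) = (u == 0).
Proof.
apply/idP/eqP => [|->]; last by rewrite dotp0r.
rewrite psumr_eq0 => [/allP u0|i _]; last by rewrite -expr2 sqr_ge0.
apply/rowP => i; rewrite mxE; apply/eqP.
by rewrite -sqrf_eq0 expr2; apply: u0; rewrite mem_index_enum.
Qed.

Lemma dotp_parallelogram u v :
  dotp (u + v) (u + v) + dotp (u - v) (u - v) = 2 * dotp u u + 2 * dotp v v.
Proof. by rewrite !dotpDl !dotpNl !dotpDr !dotpNr (dotpC v u); ring. Qed.

Lemma enorm_ge0 u : 0 <= enorm u.
Proof. exact: sqrtr_ge0. Qed.

Lemma enorm_sqr u : enorm u ^+ 2 = dotp u u.
Proof. by rewrite sqr_sqrtr // dotpp_ge0. Qed.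

Lemma enorm_gt0 u : (0 < enorm u) = (u != 0).
Proof. by rewrite sqrtr_gt0 lt_def dotpp_ge0 dotpp_eq0 andbT. Qed.

Lemma enormZ c u : enorm (c *: u) = `|c| * enorm u.
Proof. by rewrite /enorm dotpZl dotpZr mulrA -expr2 sqrtrM ?sqr_ge0 // sqrtr_sqr. Qed.

Lemma enormN u : enorm (- u) = enorm u.
Proof. by rewrite -scaleN1r enormZ normrN normr1 mul1r. Qed.

Lemma enorm_distC u v : enorm (u - v) = enorm (v - u).
Proof. by rewrite -enormN opprB. Qed.

Lemma CauchySchwarz u v : dotp u v ^+ 2 <= dotp u u * dotp v v.
Proof.
have [v0|v_neq0] := eqVneq v 0; first by rewrite v0 !dotp0r expr0n /= mulr0.
have vv_gt0 : 0 < dotp v v by rewrite lt_def dotpp_ge0 dotpp_eq0 v_neq0.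
(* |<v,v> u - <u,v> v|^2 = <v,v> (<u,u> <v,v> - <u,v>^2) *)
have := dotpp_ge0 (dotp v v *: u - dotp u v *: v).
rewrite !dotpBl !dotpBr !dotpZl !dotpZr (dotpC v u).
move: (dotp u u) (dotp u v) (dotp v v) vv_gt0 => a b c; nra.
Qed.

Lemma dotp_le_enorm u v : dotp u v <= enorm u * enorm v.
Proof.
rewrite -sqrtrM ?dotpp_ge0 // (le_trans (ler_norm _)) //.
by rewrite -sqrtr_sqr ler_sqrt ?mulr_ge0 ?dotpp_ge0 ?CauchySchwarz.
Qed.

Lemma enormD_le u v : enorm (u + v) <= enorm u + enorm v.
Proof.
rewrite -[leRHS]ger0_norm ?addr_ge0 ?enorm_ge0 // -sqrtr_sqr ler_sqrt ?sqr_ge0 //.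
rewrite sqrrD !enorm_sqr dotpDl !dotpDr (dotpC v u).
by have := dotp_le_enorm u v; lra.
Qed.

Lemma enorm_segments_sub_le (x y v : V) s lam :
  0 <= s <= 1 -> -1 <= lam <= 1 ->
  enorm (x + s *: (lam *: v) - (y + s *: v)) <= 2 * (enorm (y - x) + enorm v).
Proof.
move=> /andP[s_ge0 s_le1] /andP[lam_ge lam_le].
have -> : x + s *: (lam *: v) - (y + s *: v) = (x - y) + (s * lam - s) *: v.
  by apply/rowP => i; rewrite !mxE; ring.
rewrite (le_trans (enormD_le _ _)) // enormZ enorm_distC.
have : `|s * lam - s| <= 2 by rewrite ler_norml; apply/andP; split; nra.
have := enorm_ge0 v; have := enorm_ge0 (y - x); nra.
Qed.

End Euclidean.

Section DerivativeAlongLines.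
Context {R : realType} {d : nat}.
Local Notation V := 'rV[R]_d.

Lemma diff_grad (f : V -> R) x u : 'd f x u = dotp (grad f x) u.
Proof.
rewrite {1}(matrix_sum_delta u) big_ord1 linear_sum /dotp.
by apply: eq_bigr => j _; rewrite linearZ /= mxE mulrC.
Qed.

Lemma is_derive_along {W : normedModType R} (f : V -> W) p q s :
  derivable f (p + s *: q) q ->
  is_derive s 1 (fun t : R => f (p + t *: q)) ('D_q f (p + s *: q)).
Proof.
have shiftE : (fun t : R => t^-1 *: (f (p + (t *: 1 + s) *: q) - f (p + s *: q))) =
              (fun t : R => t^-1 *: (f (t *: q + (p + s *: q)) - f (p + s *: q))).
  apply/funext => t; congr (_ *: (f _ - _)).
  by rewrite scalerDl /GRing.scale /= mulr1 addrCA addrC.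
move=> df; split; first by rewrite /derivable /= shiftE.
by rewrite /derive /= shiftE.
Qed.

Lemma is_derive_along_grad (f : V -> R) p q s : differentiable f (p + s *: q) ->
  is_derive s 1 (fun t : R => f (p + t *: q)) (dotp (grad f (p + s *: q)) q).
Proof.
move=> df; apply: is_derive_eq; first exact/is_derive_along/diff_derivable.
by rewrite deriveE // diff_grad.
Qed.

Lemma is_derive_along_dotp (G : V -> V) p q s : differentiable G (p + s *: q) ->
  is_derive s 1 (fun t : R => dotp (G (p + t *: q)) q) (dotp ('d G (p + s *: q) q) q).
Proof.
move=> dG; have [dGq DGq] := is_derive_along G p q s (diff_derivable (v := q) dG).
have DGqE := derive_mx dGq; rewrite DGq deriveE // in DGqE.
have dGq_ij i j : derivable (fun t : R => G (p + t *: q) i j) s 1.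
  by move/derivable_mxP : dGq.
have -> : (fun t => dotp (G (p + t *: q)) q) =
    \sum_(i < d) (fun t => G (p + t *: q) ord0 i * q ord0 i) by rewrite fct_sumE.
rewrite /dotp; apply: is_derive_sum => i.
have -> : (fun t => G (p + t *: q) ord0 i * q ord0 i) =
    q ord0 i \*: (fun t => G (p + t *: q) ord0 i) by apply/funext => t /=; rewrite mulrC.
rewrite [X in is_derive _ _ _ X](_ : _ = q ord0 i *: 'D_1 (fun t : R => G (p + t *: q) ord0 i) s).
  exact/is_deriveZ/derivableP.
by rewrite DGqE mxE [RHS]mulrC.
Qed.

End DerivativeAlongLines.

(* Locked: letting unification unfold the differential is prohibitively slow. *)
HB.lock Definition hessian_form {R : realType} {d : nat} (f : 'rV[R]_d -> R) (x u : 'rV[R]_d) : R :=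
  dotp ('d (grad f) x u) u.

Lemma hessian_formZ {R : realType} {d : nat} (f : 'rV[R]_d -> R) x c u :
  hessian_form f x (c *: u) = c ^+ 2 * hessian_form f x u.
Proof. by rewrite unlock linearZ dotpZl dotpZr mulrA expr2. Qed.

Lemma hessian_formN {R : realType} {d : nat} (f : 'rV[R]_d -> R) x u :
  hessian_form f x (- u) = hessian_form f x u.
Proof. by rewrite -scaleN1r hessian_formZ sqrrN expr1n mul1r. Qed.

Lemma is_derive_along_hessian_form {R : realType} {d : nat} (f : 'rV[R]_d -> R) p q s :
  differentiable (grad f) (p + s *: q) ->
  is_derive s 1 (fun t : R => dotp (grad f (p + t *: q)) q) (hessian_form f (p + s *: q) q).
Proof. by rewrite unlock; exact: is_derive_along_dotp. Qed.

Section RealCalculus.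
Context {R : realType}.

Lemma is_derive_quadratic (a b x : R) :
  is_derive x 1 (fun t : R => a * t ^+ 2 + b * t) (2 * a * x + b).
Proof.
have -> : (fun t : R => a * t ^+ 2 + b * t) = a \*: (@id R ^+ 2) + b \*: id.
  by apply/funext => t /=; rewrite !fctE.
apply: is_derive_eq; rewrite /GRing.scale /=; ring.
Qed.

Lemma is_derive_le_sub {f g f' g' : R -> R} {a b : R} : a <= b ->
  (forall x : R, is_derive x 1 f (f' x)) -> (forall x : R, is_derive x 1 g (g' x)) ->
  (forall x, a <= x <= b -> f' x <= g' x) -> f b - f a <= g b - g a.
Proof.
move=> ab df dg f'_le_g'.
have d_gf (x : R) : is_derive x 1 (g - f) (g' x - f' x) by exact: is_deriveB.
suff : (g - f) a <= (g - f) b by rewrite !fctE; lra.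
apply: ger0_derive1_ndecr => //.
- move=> x; rewrite in_itv /= => /andP[ax xb].
  by rewrite derive1E (@derive_val _ _ _ _ _ _ _ (d_gf x)) subr_ge0 f'_le_g' // !ltW.
- apply/continuous_subspaceT => x; apply: differentiable_continuous.
  exact/derivable1_diffP/ex_derive.
Qed.

Lemma taylor2_le {f f' f'' : R -> R} {b K : R} : 0 <= b ->
  (forall s : R, is_derive s 1 f (f' s)) -> (forall s : R, is_derive s 1 f' (f'' s)) ->
  (forall s, 0 <= s <= b -> f'' s <= K) ->
  f b - f 0 - f' 0 * b <= K * b ^+ 2 / 2.
Proof.
move=> b_ge0 df df' f''_le.
have f'_le s : 0 <= s <= b -> f' s - f' 0 <= K * s.
  move=> /andP[s_ge0 s_le].
  have := is_derive_le_sub s_ge0 df' (is_derive_quadratic 0 K) _.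
  have -> : 0 * s ^+ 2 + K * s - (0 * 0 ^+ 2 + K * 0) = K * s by ring.
  apply=> x /andP[x_ge0 x_le]; rewrite mulr0 mul0r add0r f''_le //.
  by rewrite x_ge0 (le_trans x_le).
have := is_derive_le_sub b_ge0 df (is_derive_quadratic (K / 2) (f' 0)) _.
have -> : K / 2 * b ^+ 2 + f' 0 * b - (K / 2 * 0 ^+ 2 + f' 0 * 0) =
          K * b ^+ 2 / 2 + f' 0 * b by ring.
rewrite -lerBlDr.
apply=> x x0b; have := f'_le x x0b.
have -> : 2 * (K / 2) * x = K * x by field.
lra.
Qed.

Lemma ler_of_addM_gt0 (x y c : R) : (forall e, 0 < e -> x <= y + c * e) -> x <= y.
Proof.
move=> le_xy; apply/ler_addgt0Pr => e e_gt0.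
have c1_gt0 : 0 < `|c| + 1 by rewrite ltr_pwDr ?normr_ge0.
apply: (le_trans (le_xy (e / (`|c| + 1)) _)); first by rewrite divr_gt0.
rewrite lerD2l (le_trans (ler_norm _)) // normrM [`|e / _|]gtr0_norm ?divr_gt0 //.
by rewrite mulrA ler_pdivrMr // mulrC ler_pM2l // lerDl.
Qed.

End RealCalculus.

Section ConjugateOfSmooth.
Context {R : realType} {d : nat}.
Local Notation V := 'rV[R]_d.
Context {h hs : V -> R} {Lh : R}.
Hypothesis h_diff : forall x, differentiable h x.
Hypothesis grad_h_lip : forall x y : V, enorm (grad h x - grad h y) <= Lh * enorm (x - y).
Hypothesis hs_conj : forall y, (hs y)%:E = conjugate h y.

Lemma smooth_descent x u : h (x + u) <= h x + dotp (grad h x) u + Lh / 2 * dotp u u.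
Proof.
have := is_derive_le_sub ler01 (fun s => is_derive_along_grad h x u s (h_diff _))
  (is_derive_quadratic (Lh / 2 * dotp u u) (dotp (grad h x) u)) _.
rewrite scale1r scale0r addr0 expr1n expr0n /= !(mulr0, mulr1, addr0, subr0).
move=> le_sub; rewrite -addrA [dotp _ _ + _]addrC -lerBlDl; apply: le_sub => s /andP[s_ge0 s_le1].
have grad_le : enorm (grad h (x + s *: u) - grad h x) <= Lh * (s * enorm u).
  by have := grad_h_lip (x + s *: u) x; rewrite [x + _ - x]addrC addKr enormZ ger0_norm.
rewrite -lerBlDr -dotpBl (le_trans (dotp_le_enorm _ _)) //.
rewrite (le_trans (ler_wpM2r (enorm_ge0 u) grad_le)) //.
by rewrite -enorm_sqr; nra.
Qed.

Lemma conjugate_ge y x : dotp y x - h x <= hs y.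
Proof.
rewrite -lee_fin hs_conj; apply: ereal_sup_ubound; by exists x.
Qed.

Lemma conjugate_approx y e : 0 < e -> exists x, hs y - e < dotp y x - h x.
Proof.
move=> e_gt0; have : ((hs y - e)%:E < conjugate h y)%E by rewrite -hs_conj lte_fin ltrBlDr ltrDl.
by move=> /ereal_sup_gt[_ [x _ <-]]; rewrite lte_fin; exists x.
Qed.

Lemma conjugate_quadratic_ge x0 t y :
  dotp y x0 - h x0 + (t - Lh / 2 * t ^+ 2) * dotp (y - grad h x0) (y - grad h x0) <= hs y.
Proof.
set g := grad h x0; set q := y - g.
apply: le_trans (conjugate_ge y (x0 + t *: q)).
have := smooth_descent x0 (t *: q); rewrite -/g dotpDr !dotpZr dotpZl.
have -> : dotp y q = dotp q q + dotp g q by rewrite /q dotpBl addrNK.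
move: (dotp q q) (dotp g q) => a b; nra.
Qed.

Lemma conjugate_second_diff_ge w a t : 0 <= t - Lh / 2 * t ^+ 2 ->
  2 * (t - Lh / 2 * t ^+ 2) * dotp a a <= hs (w + a) + hs (w - a) - 2 * hs w.
Proof.
set c := t - _ => c_ge0; apply: (@ler_of_addM_gt0 _ _ _ 2) => e e_gt0.
have [x0 hs_w_lt] := conjugate_approx w e e_gt0; set g := grad h x0.
have := conjugate_quadratic_ge x0 t (w + a); have := conjugate_quadratic_ge x0 t (w - a).
rewrite -/g -/c [w + a - g]addrAC [w - a - g]addrAC.
rewrite [dotp (w + a) x0]dotpDl [dotp (w - a) x0]dotpBl.
have := mulr_ge0 c_ge0 (dotpp_ge0 (w - g)).
have : c * dotp (w - g + a) (w - g + a) + c * dotp (w - g - a) (w - g - a) =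
       2 * (c * dotp (w - g) (w - g)) + 2 * c * dotp a a.
  by rewrite -mulrDr dotp_parallelogram; ring.
move: (c * dotp (w - g + a) _) (c * dotp (w - g - a) _) (c * dotp (w - g) _) => A1 A2 B.
lra.
Qed.

(* With [Lh <= 0] the bound above would make the second differences of the
   finite function [hs] unbounded. *)
Lemma smooth_const_gt0 {a : V} : a != 0 -> 0 < Lh.
Proof.
move=> a_neq0; rewrite ltNge; apply/negP => Lh_le0.
set D := hs (0 + a) + hs (0 - a) - 2 * hs 0.
have aa_gt0 : 0 < dotp a a by rewrite lt_def dotpp_eq0 a_neq0 dotpp_ge0.
set t := (`|D| + 1) / (2 * dotp a a).
have t_ge0 : 0 <= t by rewrite divr_ge0 ?addr_ge0 ?mulr_ge0 // ltW.
have t_le_c : t <= t - Lh / 2 * t ^+ 2 by nra.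
have := conjugate_second_diff_ge 0 a t (le_trans t_ge0 t_le_c); rewrite -/D.
have : 2 * t * dotp a a = `|D| + 1 by rewrite /t; field; rewrite gt_eqF.
have := ler_norm D; nra.
Qed.

Lemma conjugate_strongly_convex w a : 0 < Lh ->
  dotp a a / Lh <= hs (w + a) + hs (w - a) - 2 * hs w.
Proof.
move=> Lh_gt0; have c_eq : Lh^-1 - Lh / 2 * Lh^-1 ^+ 2 = (2 * Lh)^-1.
  by field; rewrite gt_eqF.
have c_ge0 : 0 <= Lh^-1 - Lh / 2 * Lh^-1 ^+ 2 by rewrite c_eq invr_ge0 mulr_ge0 // ltW.
apply: le_trans (conjugate_second_diff_ge w a Lh^-1 c_ge0).
by rewrite c_eq [leRHS](_ : _ = dotp a a / Lh) //; field; rewrite gt_eqF.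
Qed.

Context {M : R}.
Hypothesis hs_diff : forall x, differentiable hs x.
Hypothesis grad_hs_diff : forall x, differentiable (grad hs) x.
Hypothesis hess_hs_lip : forall x y u : V,
  enorm ('d (grad hs) x u - 'd (grad hs) y u) <= M * enorm (x - y) * enorm u.

Lemma hessian_form_sub_le z w v :
  hessian_form hs z v - hessian_form hs w v <= M * enorm (z - w) * enorm v ^+ 2.
Proof.
rewrite unlock -dotpBl (le_trans (dotp_le_enorm _ _)) // expr2 mulrA.
by rewrite ler_wpM2r ?enorm_ge0.
Qed.

Lemma hessian_lip_ge0 {u : V} : u != 0 -> 0 <= M.
Proof.
move=> u_neq0; have := le_trans (enorm_ge0 _) (hess_hs_lip u 0 u).
by rewrite subr0 -mulrA pmulr_lge0 // mulr_gt0 ?enorm_gt0.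
Qed.

Lemma hessian_taylor_le w q del : 0 <= M -> 0 <= del ->
  hs (w + del *: q) - hs w - dotp (grad hs w) q * del <=
  (hessian_form hs w q + M * del * enorm q ^+ 3) * del ^+ 2 / 2.
Proof.
move=> M_ge0 del_ge0.
have := taylor2_le del_ge0 (fun s => is_derive_along_grad hs w q s (hs_diff _))
  (fun s => is_derive_along_hessian_form hs w q s (grad_hs_diff _)) _.
rewrite scale0r addr0; apply => s /andP[s_ge0 s_le].
rewrite -lerBlDl (le_trans (hessian_form_sub_le _ _ _)) //.
rewrite [w + _ - w]addrC addKr enormZ ger0_norm // (exprS _ 2) mulrA.
by rewrite ler_wpM2r ?exprn_ge0 ?enorm_ge0 // mulrA ler_wpM2r ?enorm_ge0 // ler_wpM2l.
Qed.

(* Squeeze the second difference of [hs] at [del *: v] between the strong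
   convexity bound and the two Taylor bounds, then let [del] tend to 0. *)
Lemma hessian_form_lb w v : 0 < Lh -> 0 <= M -> dotp v v / Lh <= hessian_form hs w v.
Proof.
move=> Lh_gt0 M_ge0; apply: (@ler_of_addM_gt0 _ _ _ (M * enorm v ^+ 3)) => del del_gt0.
have := hessian_taylor_le w v del M_ge0 (ltW del_gt0).
have := hessian_taylor_le w (- v) del M_ge0 (ltW del_gt0).
rewrite scalerN hessian_formN dotpNr enormN.
have := conjugate_strongly_convex w (del *: v) Lh_gt0; rewrite dotpZl dotpZr.
move=> convex_ge taylor_minus taylor_plus.
rewrite -(ler_pM2l (exprn_gt0 2 del_gt0)); lra.
Qed.

Lemma hessian_form_le z w v : 0 < Lh -> 0 <= M ->
  hessian_form hs z v <= (1 + M * Lh * enorm (z - w)) * hessian_form hs w v.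
Proof.
move=> Lh_gt0 M_ge0; have norm_le : enorm v ^+ 2 <= Lh * hessian_form hs w v.
  by rewrite enorm_sqr mulrC -ler_pdivrMr // hessian_form_lb.
rewrite mulrDl mul1r -lerBlDl (le_trans (hessian_form_sub_le z w v)) //.
by rewrite -!mulrA ler_wpM2l // [leRHS]mulrCA ler_wpM2l ?enorm_ge0.
Qed.

End ConjugateOfSmooth.

Lemma bregmanxx {R : realType} {d : nat} (f : 'rV[R]_d -> R) x : bregman f x x = 0.
Proof. by rewrite /bregman !subrr dotp0r subrr. Qed.

Lemma bregman_le_hessian {R : realType} {d : nat} (f g : 'rV[R]_d -> R) p q p' q' (K : R) :
  (forall x, differentiable f x) -> (forall x, differentiable (grad f) x) ->
  (forall x, differentiable g x) -> (forall x, differentiable (grad g) x) ->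
  (forall s, 0 <= s <= 1 ->
     hessian_form f (p + s *: q) q <= K * hessian_form g (p' + s *: q') q') ->
  bregman f (p + q) p <= K * bregman g (p' + q') p'.
Proof.
move=> f_diff grad_f_diff g_diff grad_g_diff hess_le.
have d1 (s : R) : is_derive s 1 (fun t => f (p + t *: q) - K * g (p' + t *: q'))
    (dotp (grad f (p + s *: q)) q - K * dotp (grad g (p' + s *: q')) q').
  exact: is_deriveB (is_derive_along_grad _ _ _ _ (f_diff _))
                    (is_deriveZ K (is_derive_along_grad _ _ _ _ (g_diff _))).
have d2 (s : R) : is_derive s 1
    (fun t => dotp (grad f (p + t *: q)) q - K * dotp (grad g (p' + t *: q')) q')
    (hessian_form f (p + s *: q) q - K * hessian_form g (p' + s *: q') q').
  exact: is_deriveB (is_derive_along_hessian_form _ _ _ _ (grad_f_diff _))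
                    (is_deriveZ K (is_derive_along_hessian_form _ _ _ _ (grad_g_diff _))).
have d2_le0 s : 0 <= s <= 1 ->
    hessian_form f (p + s *: q) q - K * hessian_form g (p' + s *: q') q' <= 0.
  by move=> /hess_le; rewrite subr_le0.
have := taylor2_le ler01 d1 d2 d2_le0.
rewrite /bregman !scale0r !scale1r !addr0 [p + q - p]addrC [p' + q' - p']addrC !addKr.
lra.
Qed.

Theorem proposition1 (R : realType) (d : nat) (h hs : 'rV[R]_d -> R) (Lh M : R) :
  convex_fun h ->
  (forall x : 'rV[R]_d, differentiable h x) ->
  (forall x y : 'rV[R]_d, enorm (grad h x - grad h y) <= Lh * enorm (x - y)) ->
  (forall y : 'rV[R]_d, (hs y)%:E = conjugate h y) ->
  (forall x : 'rV[R]_d, differentiable hs x) ->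
  (forall x : 'rV[R]_d, differentiable (grad hs) x) ->
  (forall x y u : 'rV[R]_d,
     enorm ('d (grad hs) x u - 'd (grad hs) y u) <= M * enorm (x - y) * enorm u) ->
  forall (x y v : 'rV[R]_d) (lam : R), -1 <= lam <= 1 ->
    bregman hs (x + lam *: v) x <=
      (1 + 2 * M * Lh * (enorm (y - x) + enorm v)) * lam ^+ 2 * bregman hs (y + v) y.
Proof.
move=> _ h_diff grad_h_lip hs_conj hs_diff grad_hs_diff hess_hs_lip x y v lam lam_bd.
have [->|v_neq0] := eqVneq v 0.
  by rewrite scaler0 !addr0 !bregmanxx mulr0.
have Lh_gt0 := smooth_const_gt0 h_diff grad_h_lip hs_conj v_neq0.
have M_ge0 := hessian_lip_ge0 hess_hs_lip v_neq0.
have hess_lb := hessian_form_lb h_diff grad_h_lip hs_conj hs_diff grad_hs_diff hess_hs_lip.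
have hess_le := hessian_form_le h_diff grad_h_lip hs_conj hs_diff grad_hs_diff hess_hs_lip.
apply: bregman_le_hessian => // s s01.
rewrite hessian_formZ [_ * lam ^+ 2]mulrC -[leRHS]mulrA ler_wpM2l ?sqr_ge0 //.
rewrite (le_trans (hess_le _ (y + s *: v) _ Lh_gt0 M_ge0)) // ler_wpM2r ?lerD2l //.
  by rewrite (le_trans _ (hess_lb _ _ Lh_gt0 M_ge0)) // divr_ge0 ?dotpp_ge0 ?(ltW Lh_gt0).
rewrite -!mulrA [leRHS]mulrCA ler_wpM2l // [leRHS]mulrCA ler_wpM2l ?(ltW Lh_gt0) //.
exact: enorm_segments_sub_le.
Qed.
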